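(* Let $A$ be a meet-semilattice and $\kappa$ a regular cardinal. Then $A$ is a complete lattice that is a $\kappa$-frame if and only if $\mathcal{BL}_\kappa(\mathcal{DM} A)=A$.
   Context: $\mathcal{DM} A$ is the complete lattice of normal ideals of $A$. An existing join $\bigvee S$ is distributive if $a\wedge\bigvee S=\bigvee\{a\wedge s:s\in S\}$ for all $a$. $\mathcal{BL} A$ is the frame of D-ideals of $A$ (downsets containing $\bigvee S$ for every subset $S$ with distributive join), and $A$ is identified with $\{{\downarrow}a:a\in A\}\subseteq\mathcal{DM} A\subseteq\mathcal{BL} A$. $\mathcal{BL}_\kappa(\mathcal{DM} A)$ is the sub-$\kappa$-frame of $\mathcal{BL} A$ generated by $\mathcal{DM} A$ (closure under finite meets and joins of fewer than $\kappa$ elements computed in $\mathcal{BL} A$). A $\kappa$-frame is a meet-semilattice in which all joins of fewer than $\kappa$ elements exist and are distributive. *)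

(* Subsets are
   predicates A -> Prop. Cardinals are represented by types. *)

Section Defs.
Context {A : Type} (le : A -> A -> Prop).

Definition partial_order : Prop :=
  (forall x, le x x) /\
  (forall x y, le x y -> le y x -> x = y) /\
  (forall x y z, le x y -> le y z -> le x z).

Definition upper_bound (S : A -> Prop) (u : A) : Prop := forall s, S s -> le s u.
Definition lower_bound (S : A -> Prop) (l : A) : Prop := forall s, S s -> le l s.

Definition is_lub (S : A -> Prop) (j : A) : Prop :=
  upper_bound S j /\ forall u, upper_bound S u -> le j u.

Definition is_meet (a b m : A) : Prop :=
  le m a /\ le m b /\ forall l, le l a -> le l b -> le l m.

Definition meet_semilattice : Prop :=
  partial_order /\ forall a b, exists m, is_meet a b m.

Definition complete_lattice : Prop :=
  forall S : A -> Prop, exists j, is_lub S j.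

Definition distributive_join (S : A -> Prop) (j : A) : Prop :=
  forall a m, is_meet a j m ->
    is_lub (fun x => exists s, S s /\ is_meet a s x) m.

Definition downset (D : A -> Prop) : Prop := forall x y, le x y -> D y -> D x.

Definition principal (a : A) : A -> Prop := fun x => le x a.

(* normal ideals: I = (I^u)^l ; the elements of DM A *)
Definition normal_ideal (I : A -> Prop) : Prop :=
  forall x, I x <-> (forall u, upper_bound I u -> le x u).

(* D-ideals: the elements of BL A *)
Definition D_ideal (D : A -> Prop) : Prop :=
  downset D /\
  forall (S : A -> Prop) (j : A),
    (forall s, S s -> D s) -> is_lub S j -> distributive_join S j -> D j.

(* join in BL A of a family of D-ideals: the least D-ideal containing the union *)
Definition BL_join {I : Type} (F : I -> A -> Prop) : A -> Prop :=
  fun x => forall D, D_ideal D -> (forall i y, F i y -> D y) -> D x.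

End Defs.

Definition card_lt (X Y : Type) : Prop :=
  (exists f : X -> Y, forall x1 x2, f x1 = f x2 -> x1 = x2) /\
  ~ (exists g : Y -> X, forall y1 y2, g y1 = g y2 -> y1 = y2).

Definition regular_cardinal (K : Type) : Prop :=
  (exists f : nat -> K, forall n m, f n = f m -> n = m) /\
  forall (I : Type) (X : I -> Type),
    card_lt I K -> (forall i, card_lt (X i) K) -> card_lt {i : I & X i} K.

Definition kappa_frame {A : Type} (le : A -> A -> Prop) (K : Type) : Prop :=
  meet_semilattice le /\
  forall S : A -> Prop, card_lt {x : A | S x} K ->
    (exists j, is_lub le S j) /\ (forall j, is_lub le S j -> distributive_join le S j).

(* BL_kappa(DM A): the sub-kappa-frame of BL A generated by DM A, i.e. the
   closure of DM A under binary meets (intersections) and joins in BL A of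
   families of fewer than kappa elements (stated up to extensional equality
   of subsets). *)
Inductive BLk_DM {A : Type} (le : A -> A -> Prop) (K : Type) : (A -> Prop) -> Prop :=
| BLk_base : forall I, normal_ideal le I -> BLk_DM le K I
| BLk_meet : forall I J, BLk_DM le K I -> BLk_DM le K J ->
    BLk_DM le K (fun x => I x /\ J x)
| BLk_join : forall (Ix : Type) (F : Ix -> A -> Prop), card_lt Ix K ->
    (forall i, BLk_DM le K (F i)) -> BLk_DM le K (BL_join le F)
| BLk_ext : forall I J, BLk_DM le K I -> (forall x, I x <-> J x) -> BLk_DM le K J.

From Stdlib Require Import IndefiniteDescription ProofIrrelevance.

(* If A is complete and a kappa-frame, every element of BL_kappa(DM A) is
   principal: a normal ideal is the principal ideal of its join, intersections
   of principal ideals are principal, and the BL-join of fewer than kappa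
   principal ideals ↓a_i is ↓(⋁ a_i), because that join is distributive and
   D-ideals are closed under distributive joins.  Conversely, if all of
   BL_kappa(DM A) is principal, the normal ideal (S^u)^l generated by S is
   some ↓a, and a = ⋁S, so A is complete.  For |S| < kappa the BL-join of the
   ↓s (s in S) is some ↓b; it contains ⋁S, and for every a and every upper
   bound u of {a ∧ s | s in S} the set {x | a ∧ x <= u} is a D-ideal containing
   S, whence a ∧ ⋁S <= u. *)

Definition is_principal {A : Type} (le : A -> A -> Prop) (I : A -> Prop) : Prop :=
  exists a, forall x, I x <-> principal le a x.

Section Ideals.
Context {A : Type} (le : A -> A -> Prop).
Hypothesis le_refl : forall x, le x x.
Hypothesis le_trans : forall x y z, le x y -> le y z -> le x z.

Lemma principal_D_ideal (b : A) : D_ideal le (principal le b).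
Proof.
  split.
  - intros x y Hxy Hy. exact (le_trans _ _ _ Hxy Hy).
  - intros S j HS [_ Hj] _. apply Hj. intros s Hs. exact (HS s Hs).
Qed.

Lemma principal_normal_ideal (a : A) : normal_ideal le (principal le a).
Proof.
  intro x; split.
  - intros Hx u Hu. exact (le_trans _ _ _ Hx (Hu a (le_refl a))).
  - intro H. apply H. intros s Hs. exact Hs.
Qed.

Lemma normal_ideal_principal_lub (I : A -> Prop) (j : A) :
  normal_ideal le I -> is_lub le I j -> forall x, I x <-> principal le j x.
Proof.
  intros HI [Hub Hleast] x. split.
  - intro Hx. exact (Hub x Hx).
  - intro Hx. apply (proj2 (HI x)). intros u Hu. exact (le_trans _ _ _ Hx (Hleast u Hu)).
Qed.

Lemma principal_meet (a b m : A) :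
  is_meet le a b m -> forall x, principal le a x /\ principal le b x <-> principal le m x.
Proof.
  intros [Hma [Hmb Hglb]] x. unfold principal. split.
  - intros [Ha Hb]. exact (Hglb x Ha Hb).
  - intro Hx. split; eauto.
Qed.

Lemma upper_lower_normal_ideal (S : A -> Prop) :
  normal_ideal le (fun x => forall u, upper_bound le S u -> le x u).
Proof.
  intro x; split.
  - intros Hx u Hu. apply Hx. intros s Hs. apply Hu. intros v Hv. exact (Hv s Hs).
  - intros Hx u Hu. apply Hx. intros y Hy. exact (Hy u Hu).
Qed.

Lemma is_lub_of_upper_lower_principal (S : A -> Prop) (a : A) :
  (forall x, (forall u, upper_bound le S u -> le x u) <-> principal le a x) ->
  is_lub le S a.
Proof.
  intro Ha. split.
  - intros s Hs. apply (proj1 (Ha s)). intros u Hu. exact (Hu s Hs).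
  - intros u Hu. exact (proj2 (Ha a) (le_refl a) u Hu).
Qed.

Lemma BL_join_principal_of_distributive_join {Ix : Type}
    (F : Ix -> A -> Prop) (f : Ix -> A) (j : A) :
  (forall i x, F i x <-> principal le (f i) x) ->
  is_lub le (fun x => exists i, f i = x) j ->
  distributive_join le (fun x => exists i, f i = x) j ->
  forall x, BL_join le F x <-> principal le j x.
Proof.
  intros HF Hj Hdistr x. split.
  - intro Hx. apply (Hx _ (principal_D_ideal j)).
    intros i y Hy. apply (le_trans _ (f i)).
    + exact (proj1 (HF i y) Hy).
    + apply (proj1 Hj). exists i. reflexivity.
  - intros Hx D HD HFD. apply (proj1 HD x j Hx).
    apply (proj2 HD (fun y => exists i, f i = y) j); [| exact Hj | exact Hdistr].
    intros s [i <-]. apply (HFD i). exact (proj2 (HF i (f i)) (le_refl _)).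
Qed.

Lemma is_meet_monotone (a x y mx my : A) :
  is_meet le a x mx -> is_meet le a y my -> le x y -> le mx my.
Proof.
  intros [Hxa [Hxx _]] [_ [_ Hglb]] Hxy. exact (Hglb mx Hxa (le_trans _ _ _ Hxx Hxy)).
Qed.

Hypothesis meets : forall a b, exists m, is_meet le a b m.

Lemma meet_below_D_ideal (a u : A) :
  D_ideal le (fun x => forall m, is_meet le a x m -> le m u).
Proof.
  split.
  - intros x y Hxy Hy mx Hmx. destruct (meets a y) as [my Hmy].
    exact (le_trans _ _ _ (is_meet_monotone _ _ _ _ _ Hmx Hmy Hxy) (Hy my Hmy)).
  - intros T t HT Ht Hdistr mt Hmt.
    apply (proj2 (Hdistr a mt Hmt)). intros x [s [Hs Hx]]. exact (HT s Hs x Hx).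
Qed.

Lemma distributive_join_of_BL_join_principal (S : A -> Prop) (j b : A) :
  is_lub le S j ->
  (forall x, BL_join le (fun p : {x | S x} => principal le (proj1_sig p)) x <->
             principal le b x) ->
  distributive_join le S j.
Proof.
  intros Hj Hb a m Hm.
  assert (Hjb : le j b).
  { apply (proj2 Hj). intros s Hs. apply (proj1 (Hb s)).
    intros D _ HD. exact (HD (exist _ s Hs) s (le_refl s)). }
  assert (Hj_in_join := proj2 (Hb j) Hjb).
  split.
  - intros x [s [Hs Hx]].
    exact (is_meet_monotone _ _ _ _ _ Hx Hm (proj1 Hj s Hs)).
  - intros u Hu. apply (Hj_in_join _ (meet_below_D_ideal a u)); [| exact Hm].
    intros [s Hs] y Hy my Hmy. destruct (meets a s) as [ms Hms].
    apply (le_trans _ ms).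
    + exact (is_meet_monotone _ _ _ _ _ Hmy Hms Hy).
    + apply Hu. exists s. split; assumption.
Qed.

End Ideals.

Lemma card_lt_of_injection {X Y : Type} (K : Type) (g : X -> Y) :
  (forall x1 x2, g x1 = g x2 -> x1 = x2) -> card_lt Y K -> card_lt X K.
Proof.
  intros Hg [[f Hf] Hnot]. split.
  - exists (fun x => f (g x)). intros x1 x2 E. exact (Hg _ _ (Hf _ _ E)).
  - intros [h Hh]. apply Hnot. exists (fun k => g (h k)).
    intros k1 k2 E. exact (Hh _ _ (Hg _ _ E)).
Qed.

Lemma card_lt_range {A Ix : Type} (K : Type) (f : Ix -> A) :
  card_lt Ix K -> card_lt {x | exists i, f i = x} K.
Proof.
  apply (card_lt_of_injection K
           (fun p : {x | exists i, f i = x} =>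
              proj1_sig (constructive_indefinite_description _ (proj2_sig p)))).
  intros [x Hx] [y Hy]. simpl.
  destruct (constructive_indefinite_description _ Hx) as [i <-].
  destruct (constructive_indefinite_description _ Hy) as [i' <-].
  simpl. intros <-. f_equal. apply proof_irrelevance.
Qed.

Lemma BLk_DM_principal {A : Type} (le : A -> A -> Prop) (K : Type) :
  complete_lattice le -> kappa_frame le K ->
  forall I, BLk_DM le K I -> is_principal le I.
Proof.
  intros CL [[[le_refl [_ le_trans]] meets] KF] I HI.
  induction HI as [I HI | I J _ [a Ha] _ [b Hb] | Ix F HIx _ HF | I J _ [a Ha] HIJ].
  - destruct (CL I) as [j Hj]. exists j.
    exact (normal_ideal_principal_lub le le_trans I j HI Hj).
  - destruct (meets a b) as [m Hm]. exists m. intro x.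
    rewrite Ha, Hb. exact (principal_meet le le_trans a b m Hm x).
  - destruct (functional_choice _ HF) as [f Hf].
    destruct (KF _ (card_lt_range K f HIx)) as [_ Hdistr].
    destruct (CL (fun x => exists i, f i = x)) as [j Hj]. exists j.
    exact (BL_join_principal_of_distributive_join le le_refl le_trans F f j Hf Hj
             (Hdistr j Hj)).
  - exists a. intro x. rewrite <- HIJ. exact (Ha x).
Qed.

Lemma complete_lattice_of_normal_ideals_principal {A : Type} (le : A -> A -> Prop) :
  partial_order le ->
  (forall I, normal_ideal le I -> is_principal le I) -> complete_lattice le.
Proof.
  intros [le_refl [_ le_trans]] Hprincipal S.
  destruct (Hprincipal _ (upper_lower_normal_ideal le S)) as [a Ha].
  exists a. exact (is_lub_of_upper_lower_principal le le_refl S a Ha).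
Qed.

Lemma kappa_frame_of_BLk_DM_principal {A : Type} (le : A -> A -> Prop) (K : Type) :
  meet_semilattice le -> complete_lattice le ->
  (forall I, BLk_DM le K I -> is_principal le I) -> kappa_frame le K.
Proof.
  intros MS CL Hprincipal. pose proof MS as [[le_refl [_ le_trans]] meets].
  split; [exact MS |]. intros S HS. split; [exact (CL S) |]. intros j Hj.
  assert (Hjoin : BLk_DM le K (BL_join le (fun p : {x | S x} => principal le (proj1_sig p)))).
  { apply BLk_join; [exact HS |]. intro p.
    exact (BLk_base le K _ (principal_normal_ideal le le_refl le_trans _)). }
  destruct (Hprincipal _ Hjoin) as [b Hb].
  exact (distributive_join_of_BL_join_principal le le_refl le_trans meets S j b Hj Hb).
Qed.

Theorem theorem4p14 (A : Type) (le : A -> A -> Prop) (K : Type) :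
  meet_semilattice le -> regular_cardinal K ->
  ((complete_lattice le /\ kappa_frame le K) <->
   (forall I : A -> Prop, BLk_DM le K I <-> exists a : A, forall x, I x <-> principal le a x)).
Proof.
  intros MS _. pose proof MS as [PO _]. pose proof PO as [le_refl [_ le_trans]].
  split.
  - intros [CL KF] I. split.
    + exact (BLk_DM_principal le K CL KF I).
    + intros [a Ha]. apply (BLk_ext le K (principal le a)).
      * exact (BLk_base le K _ (principal_normal_ideal le le_refl le_trans a)).
      * intro x. symmetry. exact (Ha x).
  - intro Hprincipal.
    assert (CL : complete_lattice le).
    { apply complete_lattice_of_normal_ideals_principal; [exact PO |].
      intros I HI. exact (proj1 (Hprincipal I) (BLk_base le K I HI)). }
    split; [exact CL |].
    apply kappa_frame_of_BLk_DM_principal; [exact MS | exact CL |].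
    intro I. exact (proj1 (Hprincipal I)).
Qed.
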